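(* Let $S$ be a nonempty subset of $\mathbb{Z}$ and $\mathcal{T}\subseteq\mathbb{N}$. Then for every positive integer $n<|S|$, the generalized integer $[n]_{S,\mathcal{T}}:=\dfrac{n!_{S,\mathcal{T}}}{(n-1)!_{S,\mathcal{T}}}$ is a positive integer.
   Context: $\mathbb{N}=\{0,1,2,\dots\}$. For an integer $b\ge0$ and $a\in\mathbb{Z}$ define $\operatorname{ord}_b(a):=\sup\{k\in\mathbb{N}: a\mathbb{Z}\subseteq b^k\mathbb{Z}\}$ (convention $0^0=1$); thus for $b\ge2$ it is the largest $k$ with $b^k\mid a$ ($+\infty$ for $a=0$), $\operatorname{ord}_0(a)=+\infty$ if $a=0$ and $0$ otherwise, and $\operatorname{ord}_1(a)=+\infty$. For nonempty $S\subseteq\mathbb{Z}$, a $b$-ordering of $S$ is a sequence $(a_i)_{i\ge0}$ in $S$ such that for each $i\ge1$, $a_i$ attains $\min_{a'\in S}\sum_{j=0}^{i-1}\operatorname{ord}_b(a'-a_j)$; the $b$-exponent sequence is $\alpha_k(S,b):=\sum_{j=0}^{k-1}\operatorname{ord}_b(a_k-a_j)$ for any $b$-ordering (independent of the choice). For $\mathcal{T}\subseteq\mathbb{N}$ the generalized factorial is $k!_{S,\mathcal{T}}:=\prod_{b\in\mathcal{T}}b^{\alpha_k(S,b)}$, with conventions $b^{+\infty}=0$ for $b=0$ and $b\ge2$, $1^{+\infty}=1$, and $b^0=1$ for all $b\in\mathbb{N}$. *)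

From Stdlib Require Import ClassicalEpsilon.
From mathcomp Require Import all_boot all_order all_algebra.
From mathcomp Require Import boolp classical_sets fsbigop.
Set Implicit Arguments. Unset Strict Implicit. Unset Printing Implicit Defensive.
Import Order.TTheory GRing.Theory Num.Theory.
Local Open Scope classical_set_scope.

(* Extended naturals N ∪ {+oo}: Some k = k, None = +oo. *)
Definition enat := option nat.
Definition addE (x y : enat) : enat :=
  match x, y with Some a, Some b => Some (a + b)%N | _, _ => None end.
Definition leE (x y : enat) : bool :=
  match x, y with
  | _, None => true
  | None, Some _ => false
  | Some a, Some b => (a <= b)%N
  end.

(* ord_b(a) = sup {k : aZ ⊆ b^k Z} = sup {k : b^k | a} (with 0^0 = 1).
   This is +oo exactly when b^k | a for all k, i.e. a = 0 or b = 1;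
   otherwise every k with b^k | |a| satisfies k <= |a| (b^k <= |a| for
   b >= 2, and only k = 0 for b = 0), so the sup is a finite max. *)
Definition ordb (b : nat) (a : int) : enat :=
  if (a == 0%R) || (b == 1%N) then None
  else Some (\max_(k < `|a|%N.+1 | (b ^ k %| `|a|%N)%N) (k : nat)).

Definition sumord (b : nat) (a : nat -> int) (i : nat) (x : int) : enat :=
  \big[addE/Some 0%N]_(j < i) ordb b (x - a j)%R.

Definition is_bordering (S : set int) (b : nat) (a : nat -> int) : Prop :=
  (forall i, S (a i)) /\
  (forall i, (0 < i)%N -> forall x, S x -> leE (sumord b a i (a i)) (sumord b a i x)).

(* a chosen b-ordering of S (the exponent sequence does not depend on the
   choice) *)
Definition bord (S : set int) (b : nat) : nat -> int :=
  epsilon (inhabits (fun _ : nat => 0%R)) (is_bordering S b).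

Definition alpha (S : set int) (b : nat) (k : nat) : enat :=
  sumord b (bord S b) k (bord S b k).

(* b^alpha with conventions b^{+oo} = 0 for b <> 1, 1^{+oo} = 1, 0^0 = 1 *)
Definition powE (b : nat) (e : enat) : nat :=
  match e with
  | Some k => (b ^ k)%N
  | None => if b == 1%N then 1%N else 0%N
  end.

(* k!_{S,T} = prod_{b in T} b^{alpha_k(S,b)}, a finitely supported product
   (MathComp-Analysis fsbigop: factors equal to 1 are dropped). *)
Definition gfact (S : set int) (T : set nat) (k : nat) : nat :=
  \big[muln/1%N]_(b \in T) powE b (alpha S b k).

From HB Require Import structures.
From Stdlib Require Import ClassicalEpsilon.
From mathcomp Require Import all_boot all_order all_algebra intdiv.
From mathcomp Require Import zify.
From mathcomp Require Import boolp classical_sets fsbigop.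
Set Implicit Arguments. Unset Strict Implicit. Unset Printing Implicit Defensive.
Import Order.TTheory GRing.Theory Num.Theory.
Local Open Scope classical_set_scope.

(* Since a_k is a candidate at step k-1 of a b-ordering, alpha_{k-1}(S,b) <=
   alpha_k(S,b), so b^alpha_{k-1} divides b^alpha_k for every b (b^{+oo} = 0
   being divisible by anything).  Positivity for k < |S| is a pigeonhole
   argument on k+1 distinct elements s of S: some x in s differs from
   a_0, ..., a_{k-1}, so alpha_k(S,b) is finite when b <> 1; and when b = 0 or
   b exceeds the diameter of s, each a_j is congruent mod b to at most one
   element of s, so some x in s is congruent to none of them and
   alpha_k(S,b) = 0.  Thus only the b <= diam s contribute, both factorials
   are positive, and their quotient is a product of positive integers. *)

Lemma addEA : associative addE.
Proof. by case=> [a|] [b|] [c|] //=; rewrite addnA. Qed.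

Lemma addEC : commutative addE.
Proof. by case=> [a|] [b|] //=; rewrite addnC. Qed.

Lemma add0E : left_id (Some 0%N) addE.
Proof. by case. Qed.

HB.instance Definition _ :=
  Monoid.isComLaw.Build enat (Some 0%N) addE addEA addEC add0E.

Lemma leE_trans : transitive leE.
Proof. by case=> [b|] [a|] [c|] //=; apply: leq_trans. Qed.

Lemma leE_addr x y : leE x (addE x y).
Proof. by case: x y => [a|] [b|] //=; rewrite leq_addr. Qed.

Lemma leE_fin x y : leE x y -> y != None -> x != None.
Proof. by case: x y => [a|] [b|]. Qed.

Lemma leEn0 x : leE x (Some 0%N) = (x == Some 0%N).
Proof. by case: x => [[|a]|]. Qed.

Lemma powE1 e : powE 1 e = 1%N.
Proof. by case: e => [k|] //=; rewrite exp1n. Qed.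

Lemma powE_dvd b e e' : leE e e' -> (powE b e %| powE b e')%N.
Proof.
have [->|b_neq1] := eqVneq b 1%N; first by rewrite !powE1.
case: e e' => [k|] [k'|] //= le_kk'; first exact: dvdn_exp2l.
by rewrite (negbTE b_neq1) dvdn0.
Qed.

Lemma ordb_fin b a : b != 1%N -> a != 0%R -> ordb b a != None.
Proof. by move=> b_neq1 a_neq0; rewrite /ordb (negbTE b_neq1) (negbTE a_neq0). Qed.

Lemma ordb_eq0 b a : ~~ (b%:Z %| a)%Z -> ordb b a = Some 0%N.
Proof.
rewrite dvdzE absz_nat => b_ndvd.
have a_neq0 : a != 0%R by apply: contraNneq b_ndvd => ->.
have b_neq1 : b != 1%N by apply: contraNneq b_ndvd => ->.
rewrite /ordb (negbTE a_neq0) (negbTE b_neq1); congr Some; apply/eqP.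
rewrite -leqn0; apply/bigmax_leqP => -[[|k] _] //= bk_dvd.
by case/negP: b_ndvd; apply: dvdn_trans bk_dvd; rewrite expnS dvdn_mulr.
Qed.

Lemma sumordS b (a : nat -> int) k (x : int) :
  sumord b a k.+1 x = addE (sumord b a k x) (ordb b (x - a k)%R).
Proof. by rewrite /sumord big_ord_recr. Qed.

Lemma sumord_fin b (a : nat -> int) k (x : int) :
  b != 1%N -> (forall j, (j < k)%N -> x != a j) -> sumord b a k x != None.
Proof.
move=> b_neq1 x_new; rewrite /sumord.
elim/big_ind: _ => // [[u|] [v|] //|j _].
by apply: ordb_fin; rewrite // subr_eq0 x_new.
Qed.

Lemma sumord_eq0 b (a : nat -> int) k (x : int) :
  (forall j, (j < k)%N -> ~~ (b%:Z %| (x - a j)%R)%Z) -> sumord b a k x = Some 0%N.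
Proof. by move=> x_ndvd; rewrite /sumord big1 // => j _; apply/ordb_eq0/x_ndvd. Qed.

Lemma uniq_exists_avoid (T : eqType) (R : T -> nat -> bool) (s : seq T) k :
  uniq s -> (k < size s)%N ->
  (forall j, {in s &, forall x y, R x j -> R y j -> x = y}) ->
  exists2 x, x \in s & forall j, (j < k)%N -> ~~ R x j.
Proof.
elim: k s => [|k IHk] s s_uniq k_lt R_inj.
  by case: s k_lt {s_uniq R_inj} => [|x s] // _; exists x; rewrite ?mem_head.
have size_Rk : (size (filter (R^~ k) s) <= 1)%N.
  case def_r: (filter (R^~ k) s) => [|x r] //.
  have : x \in filter (R^~ k) s by rewrite def_r mem_head.
  rewrite mem_filter => /andP[Rx xs].
  have r_sub : {subset x :: r <= [:: x]}.
    move=> y; rewrite -def_r mem_filter => /andP[Ry ys].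
    by rewrite (R_inj k y x) ?mem_head.
  by apply: uniq_leq_size r_sub; rewrite -def_r filter_uniq.
have [|||x] := IHk (filter (predC (R^~ k)) s).
- exact: filter_uniq.
- by move: (count_predC (R^~ k) s) k_lt size_Rk; rewrite !size_filter; lia.
- by move=> j y z; rewrite !mem_filter => /andP[_ ys] /andP[_ zs]; apply: R_inj.
rewrite mem_filter => /andP[x_nR xs] x_avoid; exists x => // j.
by rewrite ltnS leq_eqVlt => /predU1P[->|/x_avoid].
Qed.

Lemma exists_minE (T : Type) (S : set T) (f : T -> enat) :
  S !=set0 -> exists2 x, S x & forall y, S y -> leE (f x) (f y).
Proof.
move=> [x0 Sx0].
have [[y [Sy fy_fin]]|all_inf] :=
  pselect (exists y, S y /\ f y != None); last first.
  have f_inf z : S z -> f z = None.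
    by move=> Sz; apply/eqP/contraT => fz_fin; case: all_inf; exists z.
  by exists x0 => // y Sy; rewrite !f_inf.
pose P m := `[< exists x, S x /\ f x = Some m >].
have exP : exists m, P m.
  by move: fy_fin; case fy: (f y) => [m|] // _; exists m; apply/asboolP; exists y.
case: (ex_minnP exP) => m /asboolP[x [Sx fx]] m_min; exists x => // z Sz.
rewrite fx; case fz: (f z) => [m'|] //=.
by apply: m_min; apply/asboolP; exists z.
Qed.

Lemma greedy_exists (T : Type) (P : seq T -> T -> Prop) :
  (forall l, exists x, P l x) -> exists a : nat -> T, forall i, P (mkseq a i) (a i).
Proof.
move=> /choice[next Pnext].
pose prefix i := iter i (fun l => rcons l (next l)) [::].
exists (fun i => next (prefix i)) => i.
suff -> : mkseq (fun i => next (prefix i)) i = prefix i by [].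
by elim: i => // i IHi; rewrite mkseqS IHi.
Qed.

Lemma bordering_exists S b : S !=set0 -> exists a, is_bordering S b a.
Proof.
move=> S0.
pose P l x := S x /\ forall y, S y ->
  leE (sumord b (nth 0%R l) (size l) x) (sumord b (nth 0%R l) (size l) y).
have [l|a Pa] := @greedy_exists _ P.
  by have [x] := exists_minE (sumord b (nth 0%R l) (size l)) S0; exists x.
have prefixE i x : sumord b (nth 0%R (mkseq a i)) (size (mkseq a i)) x = sumord b a i x.
  by rewrite size_mkseq; apply: eq_bigr => j _; rewrite nth_mkseq.
exists a; split=> [i | i _ x Sx]; first by case: (Pa i).
by rewrite -!prefixE; case: (Pa i) => _; apply.
Qed.

Lemma bord_bordering S b : S !=set0 -> is_bordering S b (bord S b).
Proof. by move=> S0; apply: epsilon_spec; apply: bordering_exists. Qed.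

Section Exponents.

Variables (S : set int) (b : nat).
Hypothesis S0 : S !=set0.

Lemma alpha_le_sumord k x : S x -> leE (alpha S b k) (sumord b (bord S b) k x).
Proof.
case: k => [|k] Sx; first by rewrite /alpha /sumord !big_ord0.
by have [_] := bord_bordering b S0; apply.
Qed.

Lemma alpha_leS k : leE (alpha S b k) (alpha S b k.+1).
Proof.
have [S_bord _] := bord_bordering b S0.
apply: leE_trans (alpha_le_sumord k (S_bord k.+1)) _.
by rewrite /alpha sumordS; apply: leE_addr.
Qed.

Variable s : seq int.
Hypotheses (s_uniq : uniq s) (s_sub : forall x, x \in s -> S x).

Lemma alpha_fin k : b != 1%N -> (k < size s)%N -> alpha S b k != None.
Proof.
move=> b_neq1 k_lt.
have [|x xs x_new] :=
  @uniq_exists_avoid _ (fun x j => x == bord S b j) _ _ s_uniq k_lt.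
  by move=> j x y _ _ /eqP-> /eqP->.
apply: leE_fin (alpha_le_sumord k (s_sub xs)) _.
by apply: sumord_fin => // j /x_new.
Qed.

Lemma alpha_eq0 k : (k < size s)%N ->
  {in s &, forall x y : int, (b%:Z %| (x - y)%R)%Z -> x = y} ->
  alpha S b k = Some 0%N.
Proof.
move=> k_lt b_sep.
have [|x xs x_ndvd] := @uniq_exists_avoid _ (fun x j => b%:Z %| (x - bord S b j)%R)%Z
  _ _ s_uniq k_lt.
  move=> j x y xs ys dvd_x dvd_y; apply: b_sep => //.
  have -> : (x - y = (x - bord S b j) - (y - bord S b j))%R.
    by rewrite opprB addrA subrK.
  exact: rpredB.
apply/eqP; rewrite -leEn0.
by rewrite -(sumord_eq0 x_ndvd); apply: alpha_le_sumord; apply: s_sub.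
Qed.

End Exponents.

Lemma fsprod_nat_ord (T : set nat) (F : nat -> nat) N :
  (forall b, (N <= b)%N -> F b = 1%N) ->
  \big[muln/1%N]_(b \in T) F b = \prod_(0 <= b < N | b \in T) F b.
Proof.
move=> F1; rewrite (fsbigE [seq b <- iota 0 N | b \in T]).
- by rewrite big_filter_cond /index_iota subn0; apply: eq_bigl => b; rewrite andbb.
- by rewrite filter_uniq ?iota_uniq.
- by move=> b /=; rewrite mem_filter => /andP[Tb _]; rewrite -in_setE.
move=> b Tb; rewrite mem_filter mem_iota (mem_set Tb) /= add0n -leqNgt.
exact: F1.
Qed.

Section GeneralizedFactorials.

Variables (S : set int) (T : set nat) (s : seq int).
Hypotheses (S0 : S !=set0) (s_uniq : uniq s) (s_sub : forall x, x \in s -> S x).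

Let diam := \max_(x <- s) \max_(y <- s) `|x - y|%N.

Let diam_lt_dvdz_eq b : (diam < b)%N ->
  {in s &, forall x y : int, (b%:Z %| (x - y)%R)%Z -> x = y}.
Proof.
move=> diam_lt x y xs ys; rewrite dvdzE absz_nat => b_dvd.
have le_diam : (`|x - y| <= diam)%N.
  apply: leq_trans (leq_bigmax_seq (F := fun y => absz (x - y)%R) y ys isT) _.
  exact: (leq_bigmax_seq (F := fun x => \max_(y <- s) absz (x - y)%R) x xs isT).
apply/eqP; rewrite -subr_eq0 -absz_eq0 -leqn0 leqNgt; apply: contraTN diam_lt => pos.
by rewrite -leqNgt (leq_trans (dvdn_leq pos b_dvd)).
Qed.

Lemma powE_alpha_gt0 k b : (k < size s)%N -> (0 < powE b (alpha S b k))%N.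
Proof.
move=> k_lt; have [->|b_neq1] := eqVneq b 1%N; first by rewrite powE1.
have [b0|b_gt0] := posnP b.
  rewrite (alpha_eq0 S0 s_uniq s_sub k_lt) // b0 => x y _ _.
  by rewrite dvd0z subr_eq0 => /eqP.
have := alpha_fin S0 s_uniq s_sub b_neq1 k_lt.
by case: (alpha S b k) => [m|] //= _; rewrite expn_gt0 b_gt0.
Qed.

Lemma gfactE k : (k < size s)%N ->
  gfact S T k = \prod_(0 <= b < diam.+1 | b \in T) powE b (alpha S b k).
Proof.
move=> k_lt; apply: fsprod_nat_ord => b diam_lt.
by rewrite (alpha_eq0 S0 s_uniq s_sub k_lt (diam_lt_dvdz_eq diam_lt)).
Qed.

Lemma gfact_gt0 k : (k < size s)%N -> (0 < gfact S T k)%N.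
Proof. by move=> k_lt; rewrite gfactE // prodn_gt0 // => b; apply: powE_alpha_gt0. Qed.

Lemma gfact_dvdS k : (k.+1 < size s)%N -> (gfact S T k %| gfact S T k.+1)%N.
Proof.
move=> Sk_lt; rewrite !gfactE ?(ltnW Sk_lt) //.
elim/big_ind2: _ => // [*|b _]; first exact: dvdn_mul.
exact/powE_dvd/alpha_leS.
Qed.

End GeneralizedFactorials.

Theorem theorem3p12 (S : set int) (T : set nat) (n : nat) :
  S !=set0 ->
  (0 < n)%N ->
  (* n < |S| : S has at least n+1 distinct elements *)
  (exists s : seq int, [/\ uniq s, size s = n.+1 & forall x, x \in s -> S x]) ->
  gfact S T n.-1 <> 0%N /\
  exists q : nat, (0 < q)%N /\ gfact S T n = (q * gfact S T n.-1)%N.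
Proof.
move=> S0; case: n => [|k] // _ [s [s_uniq s_size s_sub]] /=.
have Sk_lt : (k.+1 < size s)%N by rewrite s_size.
have gfact_k_gt0 := gfact_gt0 T S0 s_uniq s_sub (ltnW Sk_lt).
have gfact_Sk_gt0 := gfact_gt0 T S0 s_uniq s_sub Sk_lt.
have gfact_k_dvd := gfact_dvdS T S0 s_uniq s_sub Sk_lt.
split=> [gfact_k0|]; first by rewrite gfact_k0 in gfact_k_gt0.
exists (gfact S T k.+1 %/ gfact S T k); split; last by rewrite divnK.
by rewrite divn_gt0 // dvdn_leq.
Qed.
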